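(* Let $F$ be the infinite cyclic group with generator $a$ and identity $e$, let $k$ be a field and $kF$ the group algebra with multiplication $m$. Define a linear map $\Delta:kF\to kF\otimes kF$ by $$\Delta(e)=0,\quad \Delta(a)=e\otimes e,\quad \Delta(a^{-1})=-a^{-1}\otimes a^{-1},$$ $$\Delta(a^n)=(a\otimes 1)\Delta(a^{n-1})+e\otimes a^{n-1},\qquad \Delta(a^{-n})=-(a^{-n}\otimes 1)\Delta(a^n)(1\otimes a^{-n})\quad\text{for } n>1 .$$ Then $(kF,m,\Delta)$ is an $\epsilon$-bialgebra, i.e. $\Delta$ is coassociative, $(\Delta\otimes\mathrm{id})\Delta=(\mathrm{id}\otimes\Delta)\Delta$, and $\Delta(uv)=(u\otimes 1)\Delta(v)+\Delta(u)(1\otimes v)$ for all $u,v\in kF$.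
   Context: Here $1=e$ is the unit of $kF$, and products such as $(u\otimes 1)\Delta(v)$ are taken in the algebra $kF\otimes kF$. *)

(* The group algebra kF of the infinite cyclic group
   F = <a> is modelled with multinomials' monoid-algebra carrier
   {malg k[int]} (finitely supported functions int -> k, with its
   canonical k-vector-space structure); the basis element a^n is << n >>
   (F written additively: a^n <-> n : int, e <-> 0).
   kF (x) kF is modelled as k[F x F] = {malg k[int * int]}, with
   a^i (x) a^j <-> << (i, j) >>, and kF (x) kF (x) kF as
   {malg k[(int * int) * int]}. *)
From HB Require Import structures.
From mathcomp Require Import all_boot all_order all_algebra.
From mathcomp Require Import finmap.
From mathcomp Require Import monalg.
Set Implicit Arguments. Unset Strict Implicit. Unset Printing Implicit Defensive.
Import Order.TTheory GRing.Theory Num.Theory.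
Local Open Scope ring_scope.

Section GroupAlgebra.
Variable k : fieldType.

Definition galg (G : zmodType) := {malg k[G]}.

Definition gmul (G : zmodType) (u v : galg G) : galg G :=
  \sum_(i <- msupp u) \sum_(j <- msupp v) << u@_i * v@_j *g (i + j) >>.

Definition tens (G H : zmodType) (u : galg G) (v : galg H) : galg (G * H)%type :=
  \sum_(i <- msupp u) \sum_(j <- msupp v) << u@_i * v@_j *g (i, j) >>.

Definition linext (G H : zmodType) (f : G -> galg H) (w : galg G) : galg H :=
  \sum_(g <- msupp w) w@_g *: f g.

Definition apow (n : int) : galg int := << n >>.
Definition e : galg int := apow 0.
Definition a : galg int := apow 1.
Definition one1 : galg int := << 0 >>.

Fixpoint Dpos (n : nat) : galg (int * int)%type :=
  match n with
  | 0 => 0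
  | 1 => tens e e
  | S ((S m) as p) =>
      gmul (tens a one1) (Dpos p) + tens e (apow (Posz p))
  end.

Definition Dneg (n : nat) : galg (int * int)%type :=
  match n with
  | 0 => 0 (* unused *)
  | 1 => - tens (apow (-1)) (apow (-1))
  | _ => - gmul (gmul (tens (apow (- Posz n)) one1) (Dpos n))
                (tens one1 (apow (- Posz n)))
  end.

(* Delta on the basis: Negz m = -(m+1) *)
Definition Dbasis (z : int) : galg (int * int)%type :=
  match z with
  | Posz n => Dpos n
  | Negz m => Dneg m.+1
  end.

Definition Delta : galg int -> galg (int * int)%type := linext Dbasis.

Definition Delta_id : galg (int * int)%type -> galg ((int * int) * int)%type :=
  linext (fun p : int * int => tens (Dbasis p.1) (apow p.2)).

Definition reassoc : galg (int * (int * int))%type -> galg ((int * int) * int)%type :=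
  linext (fun q : int * (int * int) => << ((q.1, q.2.1), q.2.2) >>).

Definition id_Delta : galg (int * int)%type -> galg ((int * int) * int)%type :=
  linext (fun p : int * int => reassoc (tens (apow p.1) (Dbasis p.2))).

End GroupAlgebra.

From HB Require Import structures.
From mathcomp Require Import all_boot all_order all_algebra.
From mathcomp Require Import finmap monalg zify.
Set Implicit Arguments. Unset Strict Implicit. Unset Printing Implicit Defensive.
Import GRing.Theory.
Local Open Scope ring_scope.

(* Unwinding the recursion gives the closed form
     Delta(a^n) =   sum_{i + j = n - 1, i, j >= 0} a^i (x) a^j   for n > 0,
     Delta(a^n) = - sum_{i + j = n - 1, i, j <  0} a^i (x) a^j   for n < 0,
   i.e. the coefficient of a^p (x) a^q in Delta(a^n) is [delta_coef n p q].
   Both bialgebra identities become identities between these integer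
   coefficients, checked by case analysis on signs: coassociativity
   coefficientwise for every u, the Leibniz rule on basis elements, from
   which it extends by bilinearity. *)

Definition delta_coef (n p q : int) : int :=
  if p + q + 1 == n then (if 0 <= p then 1 else 0) + (if 0 <= q then 1 else 0) - 1
  else 0.

Ltac delta_coef_cases := rewrite /delta_coef; repeat case: ifP; move=> *; lia.

Lemma delta_coef0 p q : delta_coef 0 p q = 0.
Proof. delta_coef_cases. Qed.

Lemma delta_coef1 p q : delta_coef 1 p q = ((0 == p) && (0 == q))%:R.
Proof. delta_coef_cases. Qed.

Lemma delta_coefSS (n : nat) p q :
  delta_coef n.+2 p q = delta_coef n.+1 (p - 1) q + ((0 == p) && (n.+1%:Z == q))%:R.
Proof. delta_coef_cases. Qed.

Lemma delta_coefN1 p q : delta_coef (-1) p q = - ((-1 == p) && (-1 == q))%:R.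
Proof. delta_coef_cases. Qed.

Lemma delta_coefN (n : nat) p q : delta_coef (- n%:Z) p q = - delta_coef n (p + n) (q + n).
Proof. delta_coef_cases. Qed.

Lemma delta_coef_out n p q : p + q + 1 != n -> delta_coef n p q = 0.
Proof. by rewrite /delta_coef => /negbTE ->. Qed.

Lemma delta_coefD i j p q :
  delta_coef (i + j) p q = delta_coef j (p - i) q + delta_coef i p (q - j).
Proof. delta_coef_cases. Qed.

Lemma delta_coef_coassoc n p q r :
  delta_coef n (p + q + 1) r * delta_coef (p + q + 1) p q =
  delta_coef n p (q + r + 1) * delta_coef (q + r + 1) q r.
Proof. delta_coef_cases. Qed.

Section GroupAlgebra.
Variable k : fieldType.

Lemma big_msupp1 (G : zmodType) (M : nmodType) (X : galg k G) (F : G -> M) g0 :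
  (forall g, g != g0 -> F g = 0) -> (g0 \notin msupp X -> F g0 = 0) ->
  \sum_(g <- msupp X) F g = F g0.
Proof.
move=> Fg Fg0; have [g0X|g0X] := boolP (g0 \in msupp X).
  rewrite (big_fsetD1 g0) //= big1_fset ?addr0 // => g.
  by rewrite in_fsetD1 => /andP[/Fg].
by rewrite big1_fset ?Fg0 // => g gX _; apply: Fg; apply: contraNneq g0X => <-.
Qed.

Lemma malgZU (G : zmodType) (c : k) (g : G) : << c *g g >> = c *: (<< g >> : galg k G).
Proof. by apply/malgP => h; rewrite mcoeffZ !mcoeffU mulr_natr. Qed.

Lemma msupp_scaleD_le (G : zmodType) c (u v : galg k G) :
  (msupp (c *: u + v) `<=` msupp u `|` msupp v)%fset.
Proof. exact/(fsubset_trans (msuppD_le _ _))/fsetSU/msuppZ_le. Qed.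

Lemma mcoeff_gmul (G : zmodType) (X Y : galg k G) g :
  (gmul X Y)@_g = \sum_(i <- msupp X) X@_i * Y@_(g - i).
Proof.
rewrite /gmul raddf_sum; apply: eq_bigr => i _.
rewrite raddf_sum /= (@big_msupp1 _ _ Y _ (g - i)).
- by rewrite mcoeffU (addrC i) subrK eqxx mulr1n.
- move=> j ji; rewrite mcoeffU; case: eqP => // gij.
  by move: ji; rewrite -gij addrC addKr eqxx.
- by move=> /mcoeff_outdom ->; rewrite mulr0 monalgU0 mcoeff0.
Qed.

Lemma mcoeff_gmulw (G : zmodType) (X Y : galg k G) (D : {fset G}) g :
  (msupp X `<=` D)%fset -> (gmul X Y)@_g = \sum_(i <- D) X@_i * Y@_(g - i).
Proof.
move=> XD; rewrite mcoeff_gmul (big_fset_incl _ XD) // => i _ /mcoeff_outdom ->.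
by rewrite mul0r.
Qed.

Lemma gmulUU (G : zmodType) (i j : G) : gmul (<< i >> : galg k G) << j >> = << i + j >>.
Proof. by rewrite /gmul !msuppU oner_eq0 !big_seq_fset1 !mcoeffUU mulr1. Qed.

Lemma mcoeff_gmulUl (G : zmodType) (i : G) (X : galg k G) g :
  (gmul << i >> X)@_g = X@_(g - i).
Proof. by rewrite mcoeff_gmul msuppU oner_eq0 big_seq_fset1 mcoeffUU mul1r. Qed.

Lemma mcoeff_gmulUr (G : zmodType) (j : G) (X : galg k G) g :
  (gmul X << j >>)@_g = X@_(g - j).
Proof.
rewrite mcoeff_gmul (@big_msupp1 _ _ X _ (g - j)).
- by rewrite opprB addrCA subrr addr0 mcoeffUU mulr1.
- move=> i ij; rewrite mcoeffU; case: eqP => [gij|]; last by rewrite mulr0.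
  by move: ij; rewrite gij opprB addrCA subrr addr0 eqxx.
- by move=> /mcoeff_outdom ->; rewrite mul0r.
Qed.

Lemma mcoeff_tens (G H : zmodType) (X : galg k G) (Y : galg k H) g h :
  (tens X Y)@_(g, h) = X@_g * Y@_h.
Proof.
rewrite /tens raddf_sum /= (@big_msupp1 _ _ X _ g).
- rewrite raddf_sum /= (@big_msupp1 _ _ Y _ h) ?mcoeffUU // => [j hj|].
    by rewrite mcoeffU xpair_eqE eqxx (negbTE hj).
  by move=> /mcoeff_outdom ->; rewrite mulr0.
- move=> i gi; rewrite raddf_sum /= big1 // => j _.
  by rewrite mcoeffU xpair_eqE (negbTE gi).
- move=> /mcoeff_outdom X0; rewrite raddf_sum /= big1 // => j _.
  by rewrite X0 mul0r monalgU0 mcoeff0.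
Qed.

Lemma tensUU (G H : zmodType) (g : G) (h : H) :
  tens (<< g >> : galg k G) (<< h >> : galg k H) = << (g, h) >>.
Proof.
apply/malgP => -[x y]; rewrite mcoeff_tens !mcoeffU xpair_eqE.
by case: eqP; case: eqP; rewrite ?mulr1n ?mulr0n ?mulr1 ?mulr0.
Qed.

Lemma linextw (G H : zmodType) (f : G -> galg k H) w (D : {fset G}) :
  (msupp w `<=` D)%fset -> linext f w = \sum_(g <- D) w@_g *: f g.
Proof.
move=> wD; rewrite /linext (big_fset_incl _ wD) // => g _ /mcoeff_outdom ->.
by rewrite scale0r.
Qed.

Lemma mcoeff_linext (G H : zmodType) (f : G -> galg k H) w h :
  (linext f w)@_h = \sum_(g <- msupp w) w@_g * (f g)@_h.
Proof. by rewrite /linext raddf_sum /=; apply: eq_bigr => g _; rewrite mcoeffZ. Qed.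

Lemma linextU (G H : zmodType) (f : G -> galg k H) g : linext f << g >> = f g.
Proof. by rewrite /linext msuppU oner_eq0 big_seq_fset1 mcoeffUU scale1r. Qed.

Lemma mcoeff_reassoc (X : galg k (int * (int * int))%type) p q r :
  (reassoc X)@_((p, q), r) = X@_(p, (q, r)).
Proof.
rewrite /reassoc mcoeff_linext (@big_msupp1 _ _ X _ (p, (q, r))) /=.
- by rewrite mcoeffUU mulr1.
- move=> [x [y z]] xyz /=; rewrite mcoeffU.
  case: eqP => [[xp yq zr]|]; last by rewrite mulr0n mulr0.
  by move: xyz; rewrite xp yq zr eqxx.
- by move=> /mcoeff_outdom ->; rewrite mul0r.
Qed.

Lemma linear_linext (G H : zmodType) (f : G -> galg k H) : linear (linext f).
Proof.
move=> c u v; rewrite !(@linextw _ _ f _ (msupp u `|` msupp v)%fset)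
  ?msupp_scaleD_le ?fsubsetUl ?fsubsetUr //.
rewrite scaler_sumr -big_split; apply: eq_bigr => g _.
by rewrite mcoeffD mcoeffZ scalerDl scalerA.
Qed.

Lemma linear_gmull (G : zmodType) (Y : galg k G) : linear (fun X => gmul X Y).
Proof.
move=> c u v; apply/malgP => g; rewrite mcoeffD mcoeffZ.
rewrite !(@mcoeff_gmulw _ _ _ (msupp u `|` msupp v)%fset)
  ?msupp_scaleD_le ?fsubsetUl ?fsubsetUr //.
rewrite mulr_sumr -big_split; apply: eq_bigr => i _.
by rewrite mcoeffD mcoeffZ mulrDl mulrA.
Qed.

Lemma linear_gmulr (G : zmodType) (X : galg k G) : linear (fun Y => gmul X Y).
Proof.
move=> c u v; apply/malgP => g; rewrite mcoeffD mcoeffZ !mcoeff_gmul.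
rewrite mulr_sumr -big_split; apply: eq_bigr => i _.
by rewrite mcoeffD mcoeffZ mulrDr mulrCA.
Qed.

Lemma linear_tensl (G H : zmodType) (Y : galg k H) : linear (fun X : galg k G => tens X Y).
Proof.
move=> c u v; apply/malgP => -[g h]; rewrite mcoeffD mcoeffZ !mcoeff_tens.
by rewrite mcoeffD mcoeffZ mulrDl mulrA.
Qed.

Lemma linear_tensr (G H : zmodType) (X : galg k G) : linear (fun Y : galg k H => tens X Y).
Proof.
move=> c u v; apply/malgP => -[g h]; rewrite mcoeffD mcoeffZ !mcoeff_tens.
by rewrite mcoeffD mcoeffZ mulrDr mulrCA.
Qed.

Lemma linear_comp (U V W : lmodType k) (f : U -> V) (g : V -> W) :
  linear f -> linear g -> linear (fun u => g (f u)).
Proof. by move=> lf lg c u v; rewrite lf lg. Qed.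

Lemma linear_add (U V : lmodType k) (f g : U -> V) :
  linear f -> linear g -> linear (fun u => f u + g u).
Proof. by move=> lf lg c u v; rewrite lf lg scalerDr addrACA. Qed.

Lemma linear_malgE (G : zmodType) (M : lmodType k) (F : galg k G -> M) :
  linear F -> forall w, F w = \sum_(g <- msupp w) w@_g *: F << g >>.
Proof.
move=> lF w.
pose Fl : {linear galg k G -> M} := HB.pack F (GRing.isLinear.Build _ _ _ _ F lF).
rewrite -[F w]/(Fl w) {1}(monalgE w) linear_sum; apply: eq_bigr => g _.
by rewrite malgZU linearZ.
Qed.

Lemma eq_linear_malg (G : zmodType) (M : lmodType k) (F F' : galg k G -> M) :
  linear F -> linear F' -> (forall g, F << g >> = F' << g >>) -> F =1 F'.
Proof.
move=> lF lF' FF' w; rewrite (linear_malgE lF) (linear_malgE lF').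
by apply: eq_bigr => g _; rewrite FF'.
Qed.

End GroupAlgebra.

Section Comultiplication.
Variable k : fieldType.

Lemma mcoeff_Dpos (n : nat) p q : (Dpos k n)@_(p, q) = (delta_coef n p q)%:~R.
Proof.
elim: n p q => [|[|n] IH] p q; first by rewrite mcoeff0 delta_coef0.
  by rewrite /= /e /apow tensUU mcoeffU delta_coef1 xpair_eqE; case: (_ && _).
have -> : Dpos k n.+2 =
    gmul (tens (a k) (one1 k)) (Dpos k n.+1) + tens (e k) (apow k n.+1) by [].
rewrite mcoeffD /a /one1 /e /apow !tensUU mcoeff_gmulUl (IH (p - 1) (q - 0)) mcoeffU.
by rewrite subr0 delta_coefSS intrD xpair_eqE; case: (_ && _).
Qed.

Lemma mcoeff_Dbasis (n : int) p q : (Dbasis k n)@_(p, q) = (delta_coef n p q)%:~R.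
Proof.
case: n => [n|[|m]]; first exact: mcoeff_Dpos.
  by rewrite /= mcoeffN /apow tensUU mcoeffU delta_coefN1 xpair_eqE mulrNz; case: (_ && _).
have -> : Dbasis k (Negz m.+1) = - gmul (gmul (tens (apow k (- m.+2%:Z)) (one1 k))
    (Dpos k m.+2)) (tens (one1 k) (apow k (- m.+2%:Z))) by [].
rewrite mcoeffN /one1 /apow !tensUU mcoeff_gmulUr mcoeff_gmulUl.
rewrite (mcoeff_Dpos m.+2 (p - 0 - - m.+2%:Z) (q - - m.+2%:Z - 0)) !subr0 !opprK.
by rewrite NegzE delta_coefN mulrNz.
Qed.

Lemma mcoeff_Delta (u : galg k int) p q :
  (Delta u)@_(p, q) = u@_(p + q + 1) * (delta_coef (p + q + 1) p q)%:~R.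
Proof.
rewrite /Delta mcoeff_linext (@big_msupp1 _ _ _ u _ (p + q + 1)) ?mcoeff_Dbasis //.
- by move=> n n_pq; rewrite mcoeff_Dbasis delta_coef_out ?mulr0 // eq_sym.
- by move=> /mcoeff_outdom ->; rewrite mul0r.
Qed.

Lemma mcoeff_Delta_id (X : galg k (int * int)%type) p q r :
  (Delta_id X)@_((p, q), r) = X@_(p + q + 1, r) * (delta_coef (p + q + 1) p q)%:~R.
Proof.
rewrite /Delta_id mcoeff_linext (@big_msupp1 _ _ _ X _ (p + q + 1, r)) /=.
- by rewrite mcoeff_tens mcoeff_Dbasis /apow mcoeffUU mulr1.
- move=> [n s] ns /=; rewrite mcoeff_tens mcoeff_Dbasis /apow mcoeffU.
  case: eqP => [sr|]; last by rewrite mulr0n !mulr0.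
  by rewrite delta_coef_out ?mul0r ?mulr0 //; apply: contra ns => /eqP <-; rewrite sr.
- by move=> /mcoeff_outdom ->; rewrite mul0r.
Qed.

Lemma mcoeff_id_Delta (X : galg k (int * int)%type) p q r :
  (id_Delta X)@_((p, q), r) = X@_(p, q + r + 1) * (delta_coef (q + r + 1) q r)%:~R.
Proof.
rewrite /id_Delta mcoeff_linext (@big_msupp1 _ _ _ X _ (p, q + r + 1)) /=.
- by rewrite mcoeff_reassoc mcoeff_tens mcoeff_Dbasis /apow mcoeffUU mul1r.
- move=> [s n] sn /=; rewrite mcoeff_reassoc mcoeff_tens mcoeff_Dbasis /apow mcoeffU.
  case: eqP => [sp|]; last by rewrite mulr0n mul0r mulr0.
  by rewrite delta_coef_out ?mulr0 //; apply: contra sn => /eqP <-; rewrite sp.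
- by move=> /mcoeff_outdom ->; rewrite mul0r.
Qed.

Lemma Delta_coassoc (u : galg k int) : Delta_id (Delta u) = id_Delta (Delta u).
Proof.
apply/malgP => -[[p q] r].
(* Unrestricted, the rewrite would try to unify Delta_id with id_Delta by unfolding both. *)
rewrite [LHS]mcoeff_Delta_id [RHS]mcoeff_id_Delta !mcoeff_Delta.
have -> : p + q + 1 + r + 1 = p + (q + r + 1) + 1 by lia.
by rewrite -!mulrA -!intrM delta_coef_coassoc.
Qed.

Lemma linear_Delta : linear (@Delta k).
Proof. exact: linear_linext. Qed.

Lemma Delta_gmulUU (i j : int) :
  Delta (gmul (<< i >> : galg k int) << j >>) =
  gmul (tens << i >> (one1 k)) (Delta << j >>) + gmul (Delta << i >>) (tens (one1 k) << j >>).
Proof.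
rewrite gmulUU /Delta !linextU /one1 !tensUU; apply/malgP => -[p q].
rewrite mcoeffD mcoeff_gmulUl mcoeff_gmulUr !mcoeff_Dbasis -intrD.
by rewrite !subr0 delta_coefD.
Qed.

Lemma Delta_gmul (u v : galg k int) :
  Delta (gmul u v) = gmul (tens u (one1 k)) (Delta v) + gmul (Delta u) (tens (one1 k) v).
Proof.
move: u; apply: eq_linear_malg => [||i].
- exact: linear_comp (linear_gmull _) linear_Delta.
- exact: linear_add (linear_comp (linear_tensl _) (linear_gmull _))
                    (linear_comp linear_Delta (linear_gmull _)).
move: v; apply: eq_linear_malg => [||j].
- exact: linear_comp (linear_gmulr _) linear_Delta.
- exact: linear_add (linear_comp linear_Delta (linear_gmulr _))
                    (linear_comp (linear_tensr _) (linear_gmulr _)).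
exact: Delta_gmulUU.
Qed.

End Comultiplication.

Theorem lemma3p9 (k : fieldType) :
  (forall u : galg k int, Delta_id (Delta u) = id_Delta (Delta u)) /\
  (forall u v : galg k int,
     Delta (gmul u v) =
       gmul (tens u (one1 k)) (Delta v) + gmul (Delta u) (tens (one1 k) v)).
Proof. by split; [exact: Delta_coassoc | exact: Delta_gmul]. Qed.
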